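(* Let $e_1,\dots,e_k\in\mathbb{C}^{n\times n}$ be an anticommuting family, $n\ge1$. (i) If $\mathrm{rk}(e_i^2)=\mathrm{rk}(e_i^3)$ for every $i\in[k]$ (which holds in particular if every $e_i^2$ is diagonalisable), then $\sum_{i=1}^k\mathrm{rk}(e_i^2)\le (2\log_2 n+1)n$. (ii) If every $e_i$ is diagonalisable, then $\sum_{i=1}^k\mathrm{rk}(e_i)\le(2\log_2 n+1)n$.
   Context: A family $e_1,\dots,e_k$ of complex $n\times n$ matrices is called anticommuting if $e_ie_j=-e_je_i$ for all distinct $i,j\in[k]=\{1,\dots,k\}$. $\mathrm{rk}$ denotes matrix rank. *)

From Stdlib Require Import Reals.
From HB Require Import structures.
From mathcomp Require Import all_boot all_order all_algebra.
Set Implicit Arguments. Unset Strict Implicit. Unset Printing Implicit Defensive.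
Import GRing.Theory.

Definition anticommuting (F : pzRingType) (n k : nat) (e : 'I_k -> 'M[F]_n) : Prop :=
  forall i j : 'I_k, i != j -> (e i *m e j = - (e j *m e i))%R.

Definition log2R (x : R) : R := Rdiv (ln x) (ln (INR 2)).

Definition bound5 (n : nat) : R := Rmult (Rplus (Rmult (INR 2) (log2R (INR n))) (INR 1)) (INR n).

From Stdlib Require Import Reals Lra.
From mathcomp Require Import all_boot all_order all_algebra zify.

(* Write A_i := e_i^2.  The A_i commute with every e_j, and the rank condition
   says that A_i has index one, so a subspace W stable under all e_j splits as
   W A_i (+) (W /\ ker A_i), both again stable; this reduces the bound, by
   induction on dim W, to the case where every A_i is either 0 or injective on W.
   If e_1, ..., e_m are injective on W, pick an eigenvector of e_1 e_2 in W, with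
   eigenvalue l <> 0: the l-eigenspace E of e_1 e_2 in W is mapped injectively by
   e_1 into the (-l)-eigenspace, so dim E <= dim W / 2, and e_3, ..., e_m commute
   with e_1 e_2, hence act injectively on E.  Iterating gives 2^m <= 2 (dim W)^2,
   i.e. m <= 2 log_2 (dim W) + 1, and sum_i rk (W A_i) = m dim W.  Part (ii)
   follows since a diagonalisable e has rk e^3 = rk e^2 = rk e. *)

Set Implicit Arguments. Unset Strict Implicit. Unset Printing Implicit Defensive.
Import GRing.Theory Num.Theory.

Section Bound.
Local Open Scope R_scope.

Lemma INR_expn (m c : nat) : INR (m ^ c) = INR m ^ c.
Proof.
elim: c => [|c IH]; first by rewrite expn0.
by rewrite expnS -multE mult_INR IH.
Qed.

Lemma ln_le (x y : R) : 0 < x -> x <= y -> ln x <= ln y.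
Proof. by move=> x_gt0 [/(ln_increasing _ _ x_gt0)/Rlt_le | ->] //; right. Qed.

Lemma ln2_gt0 : 0 < ln (INR 2).
Proof. rewrite -ln_1; apply: ln_increasing; simpl; lra. Qed.

Lemma log2R_le (x y : R) : 0 < x -> x <= y -> log2R x <= log2R y.
Proof.
move=> x_gt0 le_xy; apply: Rmult_le_compat_r; last exact: ln_le.
by apply/Rlt_le/Rinv_0_lt_compat/ln2_gt0.
Qed.

Lemma bound5_0 : bound5 0 = 0.
Proof. by rewrite /bound5 /= Rmult_0_r. Qed.

Lemma bound5_superadditive (a b : nat) : (0 < a)%N -> (0 < b)%N ->
  bound5 a + bound5 b <= bound5 (a + b).
Proof.
move=> /leP a_gt0 /leP b_gt0.
have [ha hb] : 1 <= INR a /\ 1 <= INR b by split; apply: (le_INR 1).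
rewrite /bound5 -plusE plus_INR.
have la : log2R (INR a) <= log2R (INR a + INR b) by apply: log2R_le; lra.
have lb : log2R (INR b) <= log2R (INR a + INR b) by apply: log2R_le; lra.
simpl INR; nra.
Qed.

(* [2 ^ c <= 2 r^2] means [c <= log_2 (2 r^2) = 2 log_2 r + 1]. *)
Lemma bound5_ge_mul (c r : nat) : (0 < r)%N -> (2 ^ c <= 2 * r ^ 2)%N ->
  INR (c * r) <= bound5 r.
Proof.
move=> /leP r_gt0 le_2c.
have hr : 1 <= INR r by apply: (le_INR 1).
have l2 := ln2_gt0.
have hln : INR c * ln (INR 2) <= ln (INR 2) + 2 * ln (INR r).
  rewrite -ln_pow; last by simpl; lra.
  have -> : ln (INR 2) + 2 * ln (INR r) = ln (INR 2 * INR r ^ 2).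
    by rewrite ln_mult ?ln_pow; simpl; try nra.
  apply: ln_le; first by apply: pow_lt; simpl; lra.
  by rewrite -!INR_expn -mult_INR; apply/le_INR/leP.
rewrite -multE mult_INR /bound5; apply: Rmult_le_compat_r; first lra.
have lnr : ln (INR r) = log2R (INR r) * ln (INR 2) by rewrite /log2R; field; lra.
rewrite lnr in hln; set L := log2R _ in hln *.
have hc : INR c <= 2 * L + 1 by apply: (Rmult_le_reg_r (ln (INR 2))); lra.
simpl INR; nra.
Qed.

End Bound.

Local Open Scope ring_scope.

Section RowSpaces.
Variables (F : fieldType) (n : nat).
Implicit Types (A B W : 'M[F]_n).

Lemma mxrank_injS m p q (W : 'M[F]_(m, n)) (E : 'M[F]_(p, n)) (f : 'M[F]_(n, q)) :
  (E <= W)%MS -> \rank (W *m f) = \rank W -> \rank (E *m f) = \rank E.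
Proof.
move=> sEW /mxrank_injP W0; apply/mxrank_injP.
by rewrite -submx0 -(eqP W0) capmxS.
Qed.

Lemma stablemx_cap m p (V : 'M[F]_(m, n)) (W : 'M[F]_(p, n)) f :
  stablemx V f -> stablemx W f -> stablemx (V :&: W)%MS f.
Proof. by move=> sV sW; apply: submx_trans (capmxMr _ _ _) (capmxS sV sW). Qed.

Lemma stablemx_mul_comm W A B : comm_mx A B -> stablemx W B -> stablemx (W *m A) B.
Proof. by move=> cAB sWB; rewrite -mulmxA cAB mulmxA submxMr. Qed.

Lemma stablemx_cap_ker_comm W A B : comm_mx A B -> stablemx W B ->
  stablemx (W :&: kermx A)%MS B.
Proof. by move=> cAB sWB; apply: stablemx_cap (comm_mx_stable_ker cAB). Qed.

Lemma eigenspace_cap0 A a b : a != b -> (eigenspace A a :&: eigenspace A b)%MS = 0.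
Proof.
move=> neq_ab; apply/eqP; rewrite -submx0; set X := (_ :&: _)%MS.
have /eigenspaceP XAa : (X <= eigenspace A a)%MS by apply: capmxSl.
have /eigenspaceP XAb : (X <= eigenspace A b)%MS by apply: capmxSr.
have /eqP : (a - b) *: X = 0 by rewrite scalerBl -XAa -XAb subrr.
by rewrite scaler_eq0 subr_eq0 (negbTE neq_ab) submx0.
Qed.

Lemma mxrank_mul_disjoint_sum m p (V : 'M[F]_(m, n)) (W : 'M[F]_(p, n)) f :
  (V :&: W)%MS = 0 -> stablemx V f -> stablemx W f ->
  \rank ((V + W)%MS *m f) = (\rank (V *m f) + \rank (W *m f))%N.
Proof.
move=> VW0 sV sW; rewrite (addsmxMr V W f) mxrank_disjoint_sum //.
by apply/eqP; rewrite -submx0 -VW0 capmxS.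
Qed.

Section IndexOne.
Variables A W : 'M[F]_n.
Hypotheses (rkA : \rank (A *m A) = \rank A) (sWA : stablemx W A).

Lemma mul_cap_ker0 : (W *m A :&: (W :&: kermx A))%MS = 0.
Proof.
have /mxrank_injP /eqP A0 := rkA.
apply/eqP; rewrite -submx0 -A0.
exact: capmxS (submxMl _ _) (capmxSr _ _).
Qed.

Lemma mul_add_cap_ker : (W *m A + (W :&: kermx A) :=: W)%MS.
Proof.
apply/eqmxP; rewrite -(mxrank_leqif_eq _).2; last by rewrite addsmx_sub sWA capmxSl.
by rewrite mxrank_disjoint_sum ?mul_cap_ker0 // mxrank_mul_ker.
Qed.

End IndexOne.

Lemma mxrank_sqr_of_cube A : \rank (A *m A) = \rank (A *m A *m A) ->
  \rank (A *m A *m (A *m A)) = \rank (A *m A).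
Proof.
move=> /esym rk32.
have sub : (A *m A *m A <= A *m A)%MS by rewrite -mulmxA submxMl.
by rewrite mulmxA (mxrank_injS sub rk32).
Qed.

Lemma diagonalizable_mxrank_sqr A : diagonalizable A -> \rank (A *m A) = \rank A.
Proof.
case=> P P_unit /diag_mxP [d]; rewrite conjumx // => dE.
set D := diag_mx d in dE.
have AE : A = invmx P *m D *m P by rewrite -dE !mulmxA mulVmx // mul1mx mulmxKV.
have AAE : A *m A = invmx P *m (D *m D) *m P by rewrite AE !mulmxA mulmxK.
have rk_conj (M : 'M[F]_n) : \rank (invmx P *m M *m P) = \rank M.
  by rewrite mxrankMfree ?row_free_unit // eqmxMfull // row_full_unit unitmx_inv.
(* [D D D^+ = D], where [D^+] inverts the nonzero diagonal entries. *)
have DDD : D *m D *m diag_mx (\row_j (d 0 j)^-1) = D.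
  rewrite !mulmx_diag; congr diag_mx; apply/rowP => j; rewrite !mxE.
  by have [->|dj0] := eqVneq (d 0 j) 0; rewrite ?mul0r ?mulfK.
rewrite AAE AE !rk_conj; apply/eqP; rewrite eqn_leq mxrankM_maxl -{1}DDD.
exact: mxrankM_maxl.
Qed.

End RowSpaces.

Lemma stablemx_cap_eigenspace (C : closedFieldType) n (W g : 'M[C]_n) :
  (0 < \rank W)%N -> stablemx W g ->
  exists a, (0 < \rank (W :&: eigenspace g a))%N.
Proof.
move=> W_gt0 sWg; set B := row_base W.
have sBg : stablemx B g by rewrite stablemx_row_base.
have [a] : exists a, root (char_poly (conjmx B g)) a.
  by apply/closed_rootP; rewrite size_char_poly eqSS -lt0n.
rewrite -eigenvalue_root_char => /eigenvalueP [v vg v_neq0]; exists a.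
have vBW : (v *m B <= W)%MS by rewrite -(eq_row_base W) submxMl.
have vBg : (v *m B <= eigenspace g a)%MS.
  by rewrite -sub_eigenspace_conjmx ?row_base_free //; apply/eigenspaceP.
have vB_neq0 : v *m B != 0 by rewrite -(mul0mx 1 B) (inj_eq (row_free_inj (row_base_free W))).
have vBE : (v *m B <= W :&: eigenspace g a)%MS by rewrite sub_capmx vBW.
by apply: leq_trans (mxrankS vBE); rewrite rank_rV vB_neq0.
Qed.

Section Anticommuting.
Variables (R : pzRingType) (n k : nat) (e : 'I_k -> 'M[R]_n).
Hypothesis anti : anticommuting e.

Lemma anticomm_comm_mul a b j : j != a -> j != b -> comm_mx (e a *m e b) (e j).
Proof.
move=> ja jb; rewrite /comm_mx [RHS]mulmxA (anti ja) mulNmx.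
by rewrite -[in RHS]mulmxA (anti jb) mulmxN opprK mulmxA.
Qed.

Lemma anticomm_comm_sqr i j : comm_mx (e i *m e i) (e j).
Proof.
have [<-|ji] := eqVneq j i; first by rewrite /comm_mx mulmxA.
exact: anticomm_comm_mul.
Qed.

Lemma anticomm_mul_anti a b : a != b -> e a *m (e a *m e b) = - (e a *m e b *m e a).
Proof.
by rewrite eq_sym => ba; rewrite -[in RHS]mulmxA (anti ba) mulmxN opprK mulmxA.
Qed.

End Anticommuting.

Section ClosedField.
Variables (C : closedFieldType) (n k : nat) (e : 'I_k -> 'M[C]_n).
Hypotheses (two_neq0 : 2 != 0 :> C) (anti : anticommuting e).

Lemma anticomm_halving a b (W : 'M[C]_n) : a != b -> (0 < \rank W)%N ->
    stablemx W (e a) -> stablemx W (e b) ->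
    \rank (W *m e a) = \rank W -> \rank (W *m e b) = \rank W ->
  exists E : 'M[C]_n, [/\ (E <= W)%MS, (0 < \rank E)%N, (2 * \rank E <= \rank W)%N
    & forall j, j != a -> j != b -> stablemx W (e j) -> stablemx E (e j)].
Proof.
move=> ab W_gt0 sWa sWb injWa injWb; set g := e a *m e b.
have [lam E_gt0] := stablemx_cap_eigenspace W_gt0 (stablemxM sWa sWb).
set E := (W :&: eigenspace g lam)%MS; set E' := (W :&: eigenspace g (- lam))%MS.
have EW : (E <= W)%MS := capmxSl _ _.
have /eigenspaceP Eg : (E <= eigenspace g lam)%MS := capmxSr _ _.
have lam_neq0 : lam != 0.
  apply: contraTneq E_gt0 => lam0; rewrite -leqNgt leqn0.
  have EaW : (E *m e a <= W)%MS := submx_trans (submxMr _ EW) sWa.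
  rewrite -(mxrank_injS EW injWa) -(mxrank_injS EaW injWb) -mulmxA Eg lam0.
  by rewrite scale0r mxrank0.
have EaE' : (E *m e a <= E')%MS.
  rewrite sub_capmx (submx_trans (submxMr _ EW) sWa) /=; apply/eigenspaceP.
  by rewrite -mulmxA anticomm_mul_anti // mulmxN mulmxA Eg -scalemxAl scaleNr.
have EE'0 : (E :&: E')%MS = 0.
  apply/eqP; rewrite -submx0 -(eigenspace_cap0 g (a := lam) (b := - lam)).
    exact: capmxS (capmxSr _ _) (capmxSr _ _).
  by rewrite -subr_eq0 opprK -mulr2n -mulr_natl mulf_neq0.
have rkEE' : (\rank E <= \rank E')%N by rewrite -(mxrank_injS EW injWa) mxrankS.
have rkEE'W : (\rank E + \rank E' <= \rank W)%N.
  by rewrite -mxrank_disjoint_sum // mxrankS // addsmx_sub EW capmxSl.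
exists E; split => //; first by lia.
move=> j ja jb sWj; apply: stablemx_cap sWj (comm_mx_stable_eigenspace _ _).
exact: anticomm_comm_mul.
Qed.

Lemma anticomm_injective_exp2 (l : seq 'I_k) (W : 'M[C]_n) :
    uniq l -> (0 < \rank W)%N ->
    {in l, forall i, stablemx W (e i)} -> {in l, forall i, \rank (W *m e i) = \rank W} ->
  (2 ^ size l <= 2 * \rank W ^ 2)%N.
Proof.
have [m lt_lm] := ubnP (size l); elim: m => // m IH in l W lt_lm *.
case: l lt_lm => [|a [|b l]] /= lt_lm uniql W_gt0 sW injW; try by nia.
move: uniql; rewrite !inE negb_or => /andP [/andP [ab al] /andP [bl ul]].
have ain : a \in [:: a, b & l] := mem_head _ _.
have bin : b \in [:: a, b & l] by rewrite !inE eqxx orbT.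
have lin j : j \in l -> j \in [:: a, b & l] by rewrite !inE => ->; rewrite !orbT.
have [E [EW E_gt0 EW2 sE]] :=
  anticomm_halving ab W_gt0 (sW a ain) (sW b bin) (injW a ain) (injW b bin).
have IHE : (2 ^ size l <= 2 * \rank E ^ 2)%N.
  apply: IH => // [|j jl|j jl]; first by lia.
    apply: sE (sW j (lin j jl)).
      by apply: contraNneq al => <-.
    by apply: contraNneq bl => <-.
  exact: mxrank_injS EW (injW j (lin j jl)).
have := leq_mul EW2 EW2; rewrite !expnS; nia.
Qed.

Lemma anticomm_sum_rank_sqr_extreme (W : 'M[C]_n) :
    (0 < \rank W)%N -> (forall j, stablemx W (e j)) ->
    (forall i, ~~ (0 < \rank (W *m (e i *m e i)) < \rank W)%N) ->
  Rle (INR (\sum_i \rank (W *m (e i *m e i)))) (bound5 (\rank W)).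
Proof.
move=> W_gt0 sW extreme; set P := [pred i | \rank (W *m (e i *m e i)) == \rank W].
have -> : (\sum_i \rank (W *m (e i *m e i)) = #|P| * \rank W)%N.
  rewrite -sum_nat_const [RHS]big_mkcond /=; apply: eq_bigr => i _.
  rewrite inE; case: ifP => [/eqP //|/negbT ne]; move: (extreme i).
  by rewrite [(_ < \rank W)%N]ltn_neqAle ne mxrankM_maxl !andbT lt0n negbK => /eqP.
apply: (bound5_ge_mul W_gt0); rewrite cardE.
apply: (anticomm_injective_exp2 (enum_uniq P) W_gt0) => [i _|i]; first exact: sW.
rewrite mem_enum inE mulmxA => /eqP rkW.
by apply/eqP; rewrite eqn_leq mxrankM_maxl -{1}rkW mxrankM_maxl.
Qed.

Hypothesis index1 : forall i, \rank (e i *m e i *m (e i *m e i)) = \rank (e i *m e i).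

Lemma anticomm_sum_rank_sqr (W : 'M[C]_n) : (forall j, stablemx W (e j)) ->
  Rle (INR (\sum_i \rank (W *m (e i *m e i)))) (bound5 (\rank W)).
Proof.
have [m lt_Wm] := ubnP (\rank W); elim: m => // m IH in W lt_Wm *; move=> sW.
have [W0|W_gt0] := posnP (\rank W).
  rewrite W0 bound5_0 big1 => [|i _]; first exact: Rle_refl.
  by apply/eqP; rewrite -leqn0 -W0 mxrankM_maxl.
have [/existsP [i /andP [rk_gt0 rk_lt]]|/existsPn mid] :=
  boolP [exists i, 0 < \rank (W *m (e i *m e i)) < \rank W]%N; last first.
  exact: anticomm_sum_rank_sqr_extreme.
set A := e i *m e i in rk_gt0 rk_lt.
have sWA : stablemx W A := stablemxM (sW i) (sW i).
have rkW := mxrank_mul_ker W A.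
set W1 := W *m A in rk_gt0 rk_lt rkW; set W0 := (W :&: kermx A)%MS in rkW.
have sW1 j : stablemx W1 (e j) := stablemx_mul_comm (anticomm_comm_sqr anti i j) (sW j).
have sW0 j : stablemx W0 (e j) :=
  stablemx_cap_ker_comm (anticomm_comm_sqr anti i j) (sW j).
have split_rank j : \rank (W *m (e j *m e j)) =
    (\rank (W1 *m (e j *m e j)) + \rank (W0 *m (e j *m e j)))%N.
  rewrite -(eqmxMr _ (mul_add_cap_ker (index1 i) sWA)) mxrank_mul_disjoint_sum //.
    exact: mul_cap_ker0 (index1 i).
  1,2: exact: stablemxM.
rewrite (eq_bigr _ (fun j _ => split_rank j)) big_split /= -plusE plus_INR -rkW.
have [ltW1 ltW0] : (\rank W1 < m /\ \rank W0 < m)%N by lia.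
apply: Rle_trans (Rplus_le_compat _ _ _ _ (IH W1 ltW1 sW1) (IH W0 ltW0 sW0)) _.
apply: bound5_superadditive; lia.
Qed.

End ClosedField.

Theorem mainTheorem5 (C : numClosedFieldType) (n k : nat) (e : 'I_k -> 'M[C]_n) :
  (0 < n)%N -> anticommuting e ->
  ((forall i : 'I_k, \rank (e i *m e i) = \rank (e i *m e i *m e i)) ->
     Rle (INR (\sum_(i < k) \rank (e i *m e i))) (bound5 n))
  /\
  ((forall i : 'I_k, diagonalizable (e i)) ->
     Rle (INR (\sum_(i < k) \rank (e i))) (bound5 n)).
Proof.
move=> _ anti; have two_neq0 : 2 != 0 :> C by rewrite pnatr_eq0.
have partI : (forall i, \rank (e i *m e i) = \rank (e i *m e i *m e i)) ->
    Rle (INR (\sum_(i < k) \rank (e i *m e i))) (bound5 n).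
  move=> rk23; have := anticomm_sum_rank_sqr two_neq0 anti
    (fun i => mxrank_sqr_of_cube (rk23 i)) (W := 1%:M) (fun j => submx1 _).
  by rewrite mxrank1; under eq_bigr do rewrite mul1mx.
split=> // diag.
have rk2 i : \rank (e i *m e i) = \rank (e i) := diagonalizable_mxrank_sqr (diag i).
rewrite (eq_bigr _ (fun i _ => esym (rk2 i))); apply: partI => i.
exact: esym (mxrank_injS (submxMl _ _) (rk2 i)).
Qed.
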